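(* For every real $p>3$ there exists $n_0=n_0(p)$ such that for all $n\geq n_0$, \[ \phi(2,p,n)>f\bigl(p,T_2(n)\bigr). \]
   Context: For a real number $p>0$ and a finite simple graph $G$, $f(p,G)=\sum_{u\in V(G)} d^p(u)$, where $d(u)$ is the degree of $u$. $\phi(2,p,n)$ is the maximum of $f(p,G)$ over all triangle-free graphs $G$ of order $n$. $T_2(n)$ is the complete bipartite graph on $n$ vertices with parts of sizes $\lceil n/2\rceil$ and $\lfloor n/2\rfloor$. *)

From HB Require Import structures.
From mathcomp Require Import all_boot all_order all_algebra.
From mathcomp Require Import reals exp.
Set Implicit Arguments. Unset Strict Implicit. Unset Printing Implicit Defensive.
Import Order.TTheory GRing.Theory Num.Theory.
Local Open Scope ring_scope.

Definition graph (n : nat) := {set 'I_n * 'I_n}.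

Definition is_simple (n : nat) (E : graph n) : bool :=
  [forall u : 'I_n, (u, u) \notin E] &&
  [forall u : 'I_n, forall v : 'I_n, ((u, v) \in E) == ((v, u) \in E)].

Definition triangle_free (n : nat) (E : graph n) : bool :=
  [forall u : 'I_n, forall v : 'I_n, forall w : 'I_n,
     ~~ [&& (u, v) \in E, (v, w) \in E & (u, w) \in E]].

Definition deg (n : nat) (E : graph n) (u : 'I_n) : nat :=
  #|[set v : 'I_n | (u, v) \in E]|.

(* f(p,G) = sum_u d(u)^p, real exponent p (powR 0 p = 0 for p > 0). *)
Definition fdeg (R : realType) (p : R) (n : nat) (E : graph n) : R :=
  \sum_(u : 'I_n) powR ((deg E u)%:R) p.

(* phi(2,p,n): max of f(p,G) over triangle-free simple graphs of order n
   (the empty graph is one such, so the max over a nonempty finite family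
   of nonnegative reals is correctly computed with default 0). *)
Definition phi2 (R : realType) (p : R) (n : nat) : R :=
  \big[Num.max/0]_(E : graph n | is_simple E && triangle_free E) fdeg p E.

Definition T2 (n : nat) : graph n :=
  [set uv : 'I_n * 'I_n | (uv.1 < uphalf n)%N != (uv.2 < uphalf n)%N].

From mathcomp Require Import all_boot all_order all_algebra.
From mathcomp Require Import reals sequences exp.
From mathcomp Require Import ring lra zify.
Set Implicit Arguments.
Unset Strict Implicit.
Unset Printing Implicit Defensive.
Import Order.TTheory GRing.Theory Num.Theory.
Local Open Scope ring_scope.

(** For [p > 3] the degree power sum of a complete bipartite graph with parts
   of sizes [k] and [n - k] is [k (n - k)^p + (n - k) k^p], a homogeneous
   function of degree [p + 1] of the two sizes; so with parts in the ratio
   [u : 1] it equals [(n / (1 + u))^(p+1) (u + u^p)], while the balanced graph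
   [T_2(n)] gives about [2 (n / 2)^(p+1)].  Hence it suffices to find one
   ratio [u] with [2 ((1 + u) / 2)^(p+1) < u + u^p]: [u = 3] works for
   [p >= 4], and [u = 1 + 2 (p - 3)] for [3 < p < 4], by two Bernoulli-type
   bounds on real powers and a polynomial inequality.  Rounding the part
   sizes to integers costs a factor [((n + 1) / (n - O(1)))^(p+1)], which
   tends to [1]. *)

Definition complete_bipartite (n k : nat) : graph n :=
  [set uv : 'I_n * 'I_n | (uv.1 < k)%N != (uv.2 < k)%N].

Lemma T2_complete_bipartite n : T2 n = complete_bipartite n (uphalf n).
Proof. by []. Qed.

Lemma complete_bipartite_simple n k : is_simple (complete_bipartite n k).
Proof.
apply/andP; split; first by apply/forallP => u; rewrite inE eqxx.
apply/forallP => u; apply/forallP => v; rewrite !inE /=.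
by case: (u < k)%N; case: (v < k)%N.
Qed.

Lemma complete_bipartite_triangle_free n k :
  triangle_free (complete_bipartite n k).
Proof.
apply/forallP => u; apply/forallP => v; apply/forallP => w; rewrite !inE /=.
by case: (u < k)%N; case: (v < k)%N; case: (w < k)%N.
Qed.

Lemma fdeg_le_phi2 (R : realType) (p : R) n (E : graph n) :
  is_simple E -> triangle_free E -> fdeg p E <= phi2 p n.
Proof.
by move=> sE tE; apply: le_bigmax_cond; rewrite sE tE.
Qed.

Lemma card_ord_lt n k : (k <= n)%N -> #|[pred v : 'I_n | (v < k)%N]| = k.
Proof.
move=> kn; have widen_inj : injective (widen_ord kn).
  by move=> i j /(congr1 val) ij; apply: val_inj.
rewrite -[RHS]card_ord -(card_imset _ widen_inj); apply: eq_card => v.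
rewrite inE; apply/idP/imsetP => [vk|[i _ ->]].
  by exists (Ordinal vk) => //; apply/val_inj.
by rewrite /= ltn_ord.
Qed.

Lemma card_ord_ge n k : (k <= n)%N ->
  #|[pred v : 'I_n | ~~ (v < k)%N]| = (n - k)%N.
Proof.
move=> kn; have := cardC [pred v : 'I_n | (v < k)%N].
rewrite (card_ord_lt kn) card_ord => /(congr1 (subn^~ k)); rewrite addKn => <-.
by apply: eq_card => v; rewrite !inE.
Qed.

Lemma deg_complete_bipartite n k (u : 'I_n) : (k <= n)%N ->
  deg (complete_bipartite n k) u = if (u < k)%N then (n - k)%N else k.
Proof.
move=> kn; rewrite /deg; case: ifP => uk.
  by rewrite -(card_ord_ge kn); apply: eq_card => v; rewrite !inE /= uk.
rewrite -[in RHS](card_ord_lt kn); apply: eq_card => v.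
by rewrite !inE /= uk; case: (v < k)%N.
Qed.

Section BipartiteDegreeSum.
Variables (R : realType) (p : R).

Definition bipartite_fdeg (x y : R) : R := x * y `^ p + y * x `^ p.

Lemma powRD1 x : 0 < x -> x `^ (p + 1) = x * x `^ p.
Proof.
move=> x0; rewrite powRD; last by rewrite (gt_eqF x0) implybT.
by rewrite (powRr1 (ltW x0)) mulrC.
Qed.

Lemma bipartite_fdeg_diag x : 0 < x -> bipartite_fdeg x x = 2 * x `^ (p + 1).
Proof. by move=> x0; rewrite /bipartite_fdeg powRD1 // mulr_natl mulr2n. Qed.

Lemma bipartite_fdegZ l x y : 0 < l -> 0 <= x -> 0 <= y ->
  bipartite_fdeg (l * x) (l * y) = l `^ (p + 1) * bipartite_fdeg x y.
Proof.
by move=> l0 x0 y0; rewrite /bipartite_fdeg !powRM ?(ltW l0) // powRD1 //; ring.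
Qed.

Lemma bipartite_fdeg_le x y x' y' : 0 <= p -> 0 <= x -> 0 <= y ->
  x <= x' -> y <= y' -> bipartite_fdeg x y <= bipartite_fdeg x' y'.
Proof.
move=> p0 x0 y0 xx' yy'.
have x'0 : 0 <= x' := le_trans x0 xx'.
have y'0 : 0 <= y' := le_trans y0 yy'.
by apply: lerD; apply: ler_pM; rewrite ?powR_ge0 ?ge0_ler_powR ?nnegrE.
Qed.

End BipartiteDegreeSum.

Lemma fdeg_complete_bipartite (R : realType) (p : R) n k : (k <= n)%N ->
  fdeg p (complete_bipartite n k) = bipartite_fdeg p k%:R (n - k)%:R.
Proof.
move=> kn; rewrite /fdeg (bigID (fun u : 'I_n => (u < k)%N)) /=.
rewrite (eq_bigr (fun _ => (n - k)%:R `^ p)); last first.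
  by move=> u uk; rewrite deg_complete_bipartite // uk.
rewrite [X in _ + X](eq_bigr (fun _ => k%:R `^ p)); last first.
  by move=> u /negbTE uk; rewrite deg_complete_bipartite // uk.
rewrite !sumr_const card_ord_lt // card_ord_ge //.
by rewrite /bipartite_fdeg !mulr_natl.
Qed.

Lemma uphalf_bounds n :
  [/\ (uphalf n <= n)%N, (2 * uphalf n <= n + 1)%N & (2 * (n - uphalf n) <= n + 1)%N].
Proof.
have := uphalf_half n; have := odd_double_half n; rewrite -muln2.
by case: (odd n) => /= e1 e2; rewrite e2; split; lia.
Qed.

Lemma fdeg_T2_le (R : realType) (p : R) n : 0 <= p ->
  fdeg p (T2 n) <= bipartite_fdeg p ((n%:R + 1) / 2) ((n%:R + 1) / 2).
Proof.
move=> p0; have [cn c2 nc2] := uphalf_bounds n.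
have half_le m : (2 * m <= n + 1)%N -> m%:R <= (n%:R + 1) / 2 :> R.
  by rewrite -(ler_nat R) natrM natrD => h; rewrite ler_pdivlMr // mulrC.
by rewrite T2_complete_bipartite fdeg_complete_bipartite // bipartite_fdeg_le ?half_le.
Qed.

Lemma phi2_ge_unbalanced (R : realType) (p u : R) n : 0 <= p -> 0 < u ->
  (1 + u) / u < n%:R ->
  ((n%:R - (1 + u) / u) / (1 + u)) `^ (p + 1) * bipartite_fdeg p u 1 <= phi2 p n.
Proof.
move=> p0 u0 Mn; set M := (1 + u) / u in Mn *; set l := (n%:R - M) / (1 + u).
have l0 : 0 < l by rewrite divr_gt0 //; lra.
set k := Num.truncn (u / (1 + u) * n%:R).
have u'0 : 0 <= u / (1 + u) by rewrite divr_ge0 //; lra.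
have u'1 : u / (1 + u) <= 1 by rewrite ler_pdivrMr; lra.
have /andP[k_le k_gt] := truncn_itv (mulr_ge0 u'0 (ler0n R n)).
rewrite -/k in k_le k_gt.
have kn : (k <= n)%N.
  by rewrite -(ler_nat R); apply: le_trans k_le _; rewrite ler_piMl.
have lu_le : l * u <= k%:R.
  have -> : l * u = u / (1 + u) * n%:R - 1.
    by rewrite /l /M; field; rewrite !gt_eqF //; lra.
  by move: k_gt; rewrite -addn1 natrD; lra.
have l_le : l * 1 <= (n - k)%:R.
  have -> : l * 1 = n%:R - u / (1 + u) * n%:R - 1 / u.
    by rewrite /l /M; field; rewrite !gt_eqF //; lra.
  rewrite natrB //; have : 0 < 1 / u by rewrite divr_gt0.
  lra.
have lu0 : 0 <= l * u by rewrite mulr_ge0 // ltW.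
have l10 : 0 <= l * 1 by rewrite mulr1 ltW.
rewrite -bipartite_fdegZ ?ler01 // ?(ltW u0) //.
apply: le_trans (bipartite_fdeg_le p0 lu0 l10 lu_le l_le) _.
rewrite -fdeg_complete_bipartite //.
apply: fdeg_le_phi2.
  exact: complete_bipartite_simple.
exact: complete_bipartite_triangle_free.
Qed.

Section PowRBernoulli.
Variable R : realType.
Implicit Types x r : R.

Lemma powR_le_Bernoulli x r : 0 < x -> 0 < r < 1 -> x `^ r <= 1 + r * (x - 1).
Proof.
move=> x0 /andP[r0 r1].
have [ir0 ir'0] : 0 < r^-1 /\ 0 < (1 - r)^-1 by rewrite !invr_gt0 subr_gt0.
have := conjugate_powR (powR_ge0 x r) ler01 ir0 ir'0.
rewrite !invrK addrC subrK => /(_ erefl).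
rewrite mulr1 -powRrM mulfV ?gt_eqF // (powRr1 (ltW x0)) powR1.
lra.
Qed.

Lemma powR_ge_Bernoulli x r : 0 < x -> 0 < r < 1 -> x <= x `^ r * (x + r * (1 - x)).
Proof.
move=> x0 r01; have xV0 : 0 < x^-1 by rewrite invr_gt0.
have inv_prod : x `^ r * x^-1 `^ r = 1.
  by rewrite -powRM ?ltW // mulfV ?gt_eqF // powR1.
have := ler_wpM2l (mulr_ge0 (powR_ge0 x r) (ltW x0)) (powR_le_Bernoulli xV0 r01).
rewrite mulrAC inv_prod mul1r -mulrA.
suff -> : x * (1 + r * (x^-1 - 1)) = x + r * (1 - x) by [].
by field; rewrite gt_eqF.
Qed.

End PowRBernoulli.

Lemma powR_natD (R : realType) (x r : R) n : 0 < x ->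
  x `^ (n%:R + r) = x ^+ n * x `^ r.
Proof.
move=> x0; rewrite powRD; last by rewrite (gt_eqF x0) implybT.
by rewrite powR_mulrn // ltW.
Qed.

Section SmallExponentGain.
Variables (R : realType) (r : R).
Hypothesis r01 : 0 < r < 1.

Let a := 1 + r.
Let b := 1 + 2 * r.
Let E := 1 + r - r ^+ 2.
Let D := 1 + 2 * r + r ^+ 3.

Lemma gain_quartic_le : a ^+ 4 * D <= b ^+ 4.
Proof.
have /andP[r0 r1] := r01; rewrite /a /b /D.
have expand : (1 + 2 * r) ^+ 4 - (1 + r) ^+ 4 * (1 + 2 * r + r ^+ 3) =
  r * (2 + r * (10 + r * (15 + r * (3 - r * (8 + r * (4 + r)))))) by ring.
have h1 : 0 < 15 + r * (3 - r * (8 + r * (4 + r))) by nra.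
have h2 : 0 < 2 + r * (10 + r * (15 + r * (3 - r * (8 + r * (4 + r))))) by nra.
nra.
Qed.

Lemma gain_quadratic_base_gt0 :
  0 < b ^+ 4 * a ^+ 2 - 2 * a ^+ 5 * D * E + b * D * E ^+ 2.
Proof.
have /andP[r0 r1] := r01.
have -> : b ^+ 4 * a ^+ 2 - 2 * a ^+ 5 * D * E + b * D * E ^+ 2 =
    r ^+ 3 * (3 + r * (15 + r * (23 + r * (10 + r * (5 + r * (14 + r * (8 + 2 * r))))))).
  by rewrite /a /b /D /E; ring.
apply: mulr_gt0; first exact: exprn_gt0.
have h : 0 <= r * (10 + r * (5 + r * (14 + r * (8 + 2 * r)))) by nra.
nra.
Qed.

(* The left side of [gain_quadratic_base_gt0] is [E^2 Q(a/E)] for the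
   quadratic [Q(A) = b^4 A^2 - 2 a^4 D A + b D], and [Q] increases beyond [a/E]. *)
Lemma gain_quadratic_gt A W : 0 <= A -> 0 <= W -> a <= A * E -> b <= W * D ->
  2 * a ^+ 4 * A < b + b ^+ 3 * (A ^+ 2 * W).
Proof.
move=> A0 W0 hA hW; have /andP[r0 r1] := r01.
have quartic := gain_quartic_le; have base := gain_quadratic_base_gt0.
have E0 : 0 < E by rewrite /E; nra.
have D0 : 0 < D by rewrite /D; nra.
have b0 : 0 < b by rewrite /b; lra.
have Ea : E <= a by rewrite /E /a; nra.
have a1 : 1 <= a by rewrite /a; lra.
set t := A * E in hA.
have mono : 0 <= (t - a) * (b ^+ 4 * (t + a) - 2 * a ^+ 4 * D * E).
  by apply: mulr_ge0; [lra | nra].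
have QA : 0 < b ^+ 4 * A ^+ 2 - 2 * a ^+ 4 * D * A + b * D.
  rewrite -(pmulr_rgt0 _ (exprn_gt0 2 E0)).
  have -> : E ^+ 2 * (b ^+ 4 * A ^+ 2 - 2 * a ^+ 4 * D * A + b * D) =
      (b ^+ 4 * a ^+ 2 - 2 * a ^+ 5 * D * E + b * D * E ^+ 2)
      + (t - a) * (b ^+ 4 * (t + a) - 2 * a ^+ 4 * D * E) by rewrite /t; ring.
  lra.
have WD : b ^+ 4 * A ^+ 2 <= b ^+ 3 * (A ^+ 2 * W) * D.
  have bA : 0 <= b ^+ 3 * A ^+ 2 by rewrite mulr_ge0 ?exprn_ge0 // ltW.
  have := ler_wpM2l bA hW.
  by rewrite exprSr; congr (_ <= _); ring.
rewrite -(ltr_pM2r D0); nra.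
Qed.

(* With [A = a^r] and [W = (b / a^2)^r], so that [b^r = A^2 W], the two
   Bernoulli bounds [powR_ge_Bernoulli] are exactly the hypotheses of
   [gain_quadratic_gt]. *)
Lemma gain_small_exponent :
  2 * a `^ (4%:R + r) < b + b `^ (3%:R + r).
Proof.
have /andP[r0 r1] := r01; set w := b / a ^+ 2.
have a0 : 0 < a by rewrite /a; lra.
have b0 : 0 < b by rewrite /b; lra.
have w0 : 0 < w by rewrite divr_gt0 ?exprn_gt0.
have bE : b = a ^+ 2 * w by rewrite /w mulrC divfK // expf_neq0 // gt_eqF.
have bpowE : b `^ r = a `^ r ^+ 2 * w `^ r.
  rewrite {1}bE (powRM _ (exprn_ge0 2 (ltW a0)) (ltW w0)); congr (_ * _).
  by rewrite !expr2 powRM // ltW.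
rewrite (powR_natD _ _ a0) (powR_natD _ _ b0) bpowE mulrA.
apply: gain_quadratic_gt; rewrite ?powR_ge0 //.
  have -> : E = a + r * (1 - a) by rewrite /E /a; ring.
  exact: powR_ge_Bernoulli.
have -> : D = a ^+ 2 * (w + r * (1 - w)).
  by rewrite /D /w /b /a; field; rewrite -/a gt_eqF.
rewrite mulrCA {1}bE; apply: ler_wpM2l; first by rewrite exprn_ge0 // ltW.
exact: powR_ge_Bernoulli.
Qed.

End SmallExponentGain.

Lemma gain_large_exponent (R : realType) (p : R) : 4 <= p ->
  2 * 2 `^ (p + 1) < 3 + 3 `^ p.
Proof.
move=> p4; rewrite powRD; last by rewrite pnatr_eq0 implybT.
rewrite powRr1 // [X in _ + X `^ p](_ : 3 = 2 * (3 / 2)); last by field.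
rewrite powRM //; last lra.
have : (3 / 2) ^+ 4 <= (3 / 2) `^ p :> R.
  by rewrite -powR_mulrn ?ler_powR //; lra.
have : 0 < 2 `^ p :> R by apply: powR_gt0.
have -> : (3 / 2) ^+ 4 = 81 / 16 :> R by field.
nra.
Qed.

Lemma exists_unbalanced_gain (R : realType) (p : R) : 3 < p ->
  exists2 u : R, 0 < u &
    bipartite_fdeg p ((1 + u) / 2) ((1 + u) / 2) < bipartite_fdeg p u 1.
Proof.
move=> p3.
have gainE u : 0 < u -> bipartite_fdeg p ((1 + u) / 2) ((1 + u) / 2) =
    2 * ((1 + u) / 2) `^ (p + 1) /\ bipartite_fdeg p u 1 = u + u `^ p.
  move=> u0; rewrite bipartite_fdeg_diag; last by rewrite divr_gt0 //; lra.
  by rewrite /bipartite_fdeg powR1 mulr1 mul1r.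
have [p4|p4] := ltP p 4.
  have r01 : 0 < p - 3 < 1 by apply/andP; split; lra.
  have u0 : 0 < 1 + 2 * (p - 3) by lra.
  exists (1 + 2 * (p - 3)) => //; have [-> ->] := gainE _ u0.
  move: r01 (gain_small_exponent r01); set r := p - 3 => r01.
  have -> : (1 + (1 + 2 * r)) / 2 = 1 + r by field.
  have -> : p = 3%:R + r by rewrite /r; ring.
  by have -> : 3%:R + r + 1 = 4%:R + r by ring.
exists 3 => //; have [-> ->] := gainE 3 (ltr0Sn _ 2).
have -> : (1 + 3) / 2 = 2 :> R by field.
exact: gain_large_exponent.
Qed.

Lemma exists_powR1D_lt (R : realType) (q rho : R) : 0 < q -> 1 < rho ->
  exists2 d : R, 0 < d & (1 + d) `^ q < rho.
Proof.
move=> q0 rho1; have lnrho0 : 0 < ln rho by rewrite ln_gt0.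
have d0 : 0 < ln rho / (2 * q) by rewrite divr_gt0 // mulr_gt0.
exists (ln rho / (2 * q)) => //.
rewrite /powR gt_eqF; last lra.
apply: (@le_lt_trans _ _ (expR (ln rho / 2))).
  rewrite ler_expR [X in _ <= X](_ : _ = q * (ln rho / (2 * q))); last first.
    by field; rewrite gt_eqF.
  by rewrite ler_wpM2l ?(ltW q0) // le_ln1Dx //; lra.
by rewrite -[X in _ < X](@lnK _ rho) ?posrE ?ltr_expR; lra.
Qed.

Lemma eventually_ratio_powR_lt (R : realType) (M q rho : R) :
  0 <= M -> 0 < q -> 1 < rho ->
  exists n0 : nat, forall n : nat, (n0 <= n)%N ->
    M < n%:R /\ ((n%:R + 1) / (n%:R - M)) `^ q < rho.
Proof.
move=> M0 q0 rho1; have [d d0 hd] := exists_powR1D_lt q0 rho1.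
set N := (1 + M * (1 + d)) / d.
have N0 : 0 < N by rewrite divr_gt0 //; nra.
exists (Num.truncn (N + M)).+1 => n hn.
have hnR : N + M < n%:R by apply: lt_le_trans (truncnS_gt _) _; rewrite ler_nat.
have nM0 : 0 < n%:R - M by lra.
split; first lra.
apply: le_lt_trans hd; apply: ge0_ler_powR; rewrite ?nnegrE ?(ltW q0) //.
- by apply: divr_ge0; lra.
- lra.
- rewrite ler_pdivrMr //.
  have : N < n%:R - M by lra.
  rewrite ltr_pdivrMr //; nra.
Qed.

Theorem mainTheorem7 (R : realType) (p : R) :
  3 < p ->
  exists n0 : nat, forall n : nat, (n0 <= n)%N -> fdeg p (T2 n) < phi2 p n.
Proof.
move=> p3; have p0 : 0 <= p by lra.
have [u u0 gain] := exists_unbalanced_gain p3.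
set m := (1 + u) / 2 in gain; set M := (1 + u) / u.
have m0 : 0 < m by rewrite divr_gt0 //; lra.
have Gm0 : 0 < bipartite_fdeg p m m.
  by rewrite bipartite_fdeg_diag // mulr_gt0 ?powR_gt0.
have M0 : 0 <= M by rewrite divr_ge0 //; lra.
have rho1 : 1 < bipartite_fdeg p u 1 / bipartite_fdeg p m m.
  by rewrite ltr_pdivlMr // mul1r.
have q0 : 0 < p + 1 by lra.
have [n0 large_n] := eventually_ratio_powR_lt M0 q0 rho1.
exists n0 => n /large_n[Mn ratio_lt].
set l := (n%:R - M) / (1 + u); set th := (n%:R + 1) / (n%:R - M).
have l0 : 0 < l by rewrite divr_gt0 //; lra.
have th0 : 0 < th by rewrite divr_gt0 //; lra.
apply: le_lt_trans (fdeg_T2_le n p0) _.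
apply: lt_le_trans (phi2_ge_unbalanced p0 u0 Mn).
have -> : (n%:R + 1) / 2 = l * th * m by rewrite /l /th /m; field; rewrite !gt_eqF //; lra.
rewrite (bipartite_fdegZ _ (mulr_gt0 l0 th0) (ltW m0) (ltW m0)) -/M -/l.
rewrite (powRM _ (ltW l0) (ltW th0)) -mulrA ltr_pM2l ?powR_gt0 //.
by rewrite -ltr_pdivlMr.
Qed.
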